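(* Let $(G,M,\Delta)$ be a Garside structure, $(H,N,\delta)$ a parabolic substructure with $H\ne\{1\}$, and $T$ the set of $(H,N)$-reduced elements of $G$. Let $\mathcal S=\mathrm{Div}(\Delta)\setminus\{1\}$ and let $\lg$ denote word length in $G$ with respect to $\mathcal S$. For a right coset $C$ of $H$ in $G$ put $\lg(C)=\min\{\lg(\beta):\beta\in C\}$. Then $\lg(\theta)=\lg(H\theta)$ for every $\theta\in T$.
   Context: Let $G$ be a group and $M$ a submonoid with $M\cap M^{-1}=\{1\}$. Define partial orders on $G$ by $\alpha\le_L\beta$ iff $\alpha^{-1}\beta\in M$, and $\alpha\le_R\beta$ iff $\beta\alpha^{-1}\in M$. For $a\in M$ let $\mathrm{Div}_L(a)=\{b\in M: b\le_L a\}$, $\mathrm{Div}_R(a)=\{b\in M: b\le_R a\}$; $a$ is balanced if these coincide, and then $\mathrm{Div}(a)$ denotes this set. $M$ is Noetherian if each $a\in M$ admits an integer $n$ such that $a$ is not a product of more than $n$ non-trivial factors. A Garside structure $(G,M,\Delta)$ consists of such $G,M$ and a balanced $\Delta\in M$ such that: $M$ is Noetherian; $\mathrm{Div}(\Delta)$ is finite and generates $M$ as a monoid and $G$ as a group; $(G,\le_L)$ is a lattice (with meet $\wedge_L$). A parabolic substructure is a triple $(H,N,\delta)$ where $\delta\in M$ is balanced, $H$ (resp. $N$) is the subgroup of $G$ (resp. submonoid of $M$) generated by $\mathrm{Div}(\delta)$, and $\mathrm{Div}(\delta)=\mathrm{Div}(\Delta)\cap N$. Put $\omega=\delta^{-1}\Delta\in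 M$. An element $a\in M$ is unmovable if $\Delta\not\le_L a$. Every $\alpha\in G$ has a unique right $\Delta$-form $\alpha=a\Delta^p$ with $a\in M$ unmovable and $p\in\mathbb Z$. An element $a\in M$ is $N$-reduced if $a\wedge_L\delta=1$. An element $\alpha\in G$ with right $\Delta$-form $a\Delta^p$ is $(H,N)$-reduced if $a$ is $N$-reduced and either $p=0$, or $p<0$ and $\omega\not\le_L a$. *)

From Stdlib Require Import ZArith List.
Import ListNotations.

Record Grp := {
  gcar :> Type;
  gmul : gcar -> gcar -> gcar;
  ginv : gcar -> gcar;
  gone : gcar;
  gmulA : forall x y z, gmul x (gmul y z) = gmul (gmul x y) z;
  gmul1x : forall x, gmul gone x = x;
  gmulx1 : forall x, gmul x gone = x;
  gmulVx : forall x, gmul (ginv x) x = gone;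
  gmulxV : forall x, gmul x (ginv x) = gone
}.

Arguments gmul {g}.
Arguments ginv {g}.
Arguments gone {g}.

Section Garside.
Variable G : Grp.
Local Notation "x * y" := (gmul x y).
Local Notation "x ^-1" := (ginv x) (at level 3, format "x ^-1").
Local Notation "1" := (@gone G).

Fixpoint gprod (l : list G) : G :=
  match l with [] => 1 | x :: l' => x * gprod l' end.

Fixpoint gpow (x : G) (n : nat) : G :=
  match n with O => 1 | S n' => x * gpow x n' end.
Definition zpow (x : G) (z : Z) : G :=
  match z with
  | Z0 => 1
  | Zpos p => gpow x (Pos.to_nat p)
  | Zneg p => gpow (x^-1) (Pos.to_nat p)
  end.

Definition submonoid (M : G -> Prop) : Prop :=
  M 1 /\ (forall x y, M x -> M y -> M (x * y)).
Definition pointed (M : G -> Prop) : Prop :=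
  forall x, M x -> M (x^-1) -> x = 1.

Definition leL (M : G -> Prop) (a b : G) : Prop := M (a^-1 * b).
Definition leR (M : G -> Prop) (a b : G) : Prop := M (b * a^-1).

Definition DivL (M : G -> Prop) (a : G) (b : G) : Prop := M b /\ leL M b a.
Definition DivR (M : G -> Prop) (a : G) (b : G) : Prop := M b /\ leR M b a.

(** a is balanced: Div_L(a) = Div_R(a) (as sets); Div(a) is then Div_L(a). *)
Definition balanced (M : G -> Prop) (a : G) : Prop :=
  M a /\ forall b, DivL M a b <-> DivR M a b.
Definition Div (M : G -> Prop) (a : G) : G -> Prop := DivL M a.

Definition noetherian (M : G -> Prop) : Prop :=
  forall a, M a -> exists n : nat, forall l : list G,
    (forall x, In x l -> M x /\ x <> 1) -> gprod l = a -> length l <= n.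

Definition gen_monoid (S : G -> Prop) (b : G) : Prop :=
  exists l : list G, (forall x, In x l -> S x) /\ gprod l = b.
Definition letter (e : bool * G) : G := if fst e then snd e else (snd e)^-1.
Definition eval_word (w : list (bool * G)) : G := gprod (map letter w).
Definition gen_group (S : G -> Prop) (g : G) : Prop :=
  exists w : list (bool * G), (forall e, In e w -> S (snd e)) /\ eval_word w = g.

Definition finite_set (S : G -> Prop) : Prop :=
  exists l : list G, forall x, S x <-> In x l.

Definition is_meetL (M : G -> Prop) (c a b : G) : Prop :=
  leL M c a /\ leL M c b /\ (forall d, leL M d a -> leL M d b -> leL M d c).
Definition is_joinL (M : G -> Prop) (c a b : G) : Prop :=
  leL M a c /\ leL M b c /\ (forall d, leL M a d -> leL M b d -> leL M c d).
Definition latticeL (M : G -> Prop) : Prop :=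
  forall a b, (exists c, is_meetL M c a b) /\ (exists c, is_joinL M c a b).

Definition garside (M : G -> Prop) (D : G) : Prop :=
  submonoid M /\ pointed M /\ balanced M D /\
  noetherian M /\
  finite_set (Div M D) /\
  (forall b, M b <-> gen_monoid (Div M D) b) /\
  (forall g, gen_group (Div M D) g) /\
  latticeL M.

Definition parH (M : G -> Prop) (d : G) : G -> Prop := gen_group (Div M d).
Definition parN (M : G -> Prop) (d : G) : G -> Prop := gen_monoid (Div M d).
Definition parabolic (M : G -> Prop) (D d : G) : Prop :=
  balanced M d /\
  forall b, Div M d b <-> (Div M D b /\ parN M d b).

Definition unmovable (M : G -> Prop) (D a : G) : Prop := M a /\ ~ leL M D a.
Definition right_Dform (M : G -> Prop) (D alpha a : G) (p : Z) : Prop :=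
  unmovable M D a /\ alpha = a * zpow D p.
Definition N_reduced (M : G -> Prop) (d a : G) : Prop :=
  M a /\ is_meetL M 1 a d.
Definition omega (D d : G) : G := d^-1 * D.
Definition HN_reduced (M : G -> Prop) (D d alpha : G) : Prop :=
  exists (a : G) (p : Z), right_Dform M D alpha a p /\ N_reduced M d a /\
    (p = 0%Z \/ (p < 0 /\ ~ leL M (omega D d) a)%Z).

(** Word length with respect to S = Div(Δ) \ {1} (words in S ∪ S^{-1}). *)
Definition Sgen (M : G -> Prop) (D : G) (x : G) : Prop := Div M D x /\ x <> 1.
Definition represents (M : G -> Prop) (D : G) (w : list (bool * G)) (b : G) :=
  (forall e, In e w -> Sgen M D (snd e)) /\ eval_word w = b.
Definition wordlen (M : G -> Prop) (D b : G) (n : nat) : Prop :=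
  (exists w, represents M D w b /\ length w = n) /\
  (forall w, represents M D w b -> n <= length w).
Definition in_rcoset (Hs : G -> Prop) (theta b : G) : Prop :=
  exists h, Hs h /\ b = h * theta.
Definition coset_len (M : G -> Prop) (D : G) (Hs : G -> Prop) (theta : G) (n : nat) : Prop :=
  (exists b, in_rcoset Hs theta b /\ wordlen M D b n) /\
  (forall b m, in_rcoset Hs theta b -> wordlen M D b m -> n <= m).

End Garside.

(* Let θ = a Δ^p be (H,N)-reduced and let a word of length m represent h θ, h ∈ H.
   Each letter moves the infimum or the supremum of a word by one, so
   Δ^i ≼ hθ ≼ Δ^s with max(s,0) + max(-i,0) ≤ m, and right multiplication by
   Δ^-p gives Δ^(i-p) ≼ ha ≼ Δ^(s-p).  Since N is closed under left divisors in M
   and 1 ∨ h ∈ N for h ∈ H, an N-reduced a shares no nontrivial lower bound with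
   any element of H; this forces a ≼ Δ^(s-p).  If p < 0, then Δ ≼ ha would force
   ω ≼ a, so i ≤ p.  Hence a is a product of at most max(s-p,0) simples, and
   pairing each simple with one factor Δ^-1 writes θ as a word of length at most
   max(s-p,0,-p) ≤ m. *)

From Stdlib Require Import ZArith List Lia Classical ClassicalEpsilon Wf_nat.
Import ListNotations.

Section GroupFacts.
Variable G : Grp.
Local Notation "x * y" := (@gmul G x y).
Local Notation "x ^-1" := (@ginv G x) (at level 3, format "x ^-1").
Local Notation one := (@gone G).

Lemma mul_eq1_inv (x y : G) : x * y = one -> y = x^-1.
Proof.
  intro E. rewrite <- (gmul1x G y), <- (gmulVx G x), <- gmulA, E. apply gmulx1.
Qed.

Lemma inv_mul (x y : G) : (x * y)^-1 = y^-1 * x^-1.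
Proof.
  symmetry. apply mul_eq1_inv.
  rewrite <- gmulA, (gmulA G y), gmulxV, gmul1x. apply gmulxV.
Qed.

Lemma inv_inv (x : G) : (x^-1)^-1 = x.
Proof. symmetry. apply mul_eq1_inv. apply gmulVx. Qed.

Lemma inv_one : one^-1 = one.
Proof. symmetry. apply mul_eq1_inv. apply gmul1x. Qed.

Lemma mul_inv_mul (x y : G) : x * (x^-1 * y) = y.
Proof. rewrite gmulA, gmulxV. apply gmul1x. Qed.

Lemma inv_mul_mul (x y : G) : x^-1 * (x * y) = y.
Proof. rewrite gmulA, gmulVx. apply gmul1x. Qed.

Lemma gmulA_r (x y z : G) : x * y * z = x * (y * z).
Proof. symmetry. apply gmulA. Qed.

End GroupFacts.

(* [group] right-associates products and cancels adjacent x^-1 x pairs; it never commutes. *)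
Global Hint Rewrite gmulA_r gmul1x gmulx1 gmulVx gmulxV inv_mul inv_inv inv_one
  mul_inv_mul inv_mul_mul : group_simpl.
Ltac group := autorewrite with group_simpl; reflexivity.

Section Products.
Variable G : Grp.
Local Notation "x * y" := (@gmul G x y).
Local Notation "x ^-1" := (@ginv G x) (at level 3, format "x ^-1").
Local Notation one := (@gone G).
Local Notation "x ^^ z" := (zpow G x z) (at level 30).

Lemma gprod_app (l1 l2 : list G) : gprod G (l1 ++ l2) = gprod G l1 * gprod G l2.
Proof. induction l1 as [|x l1 IH]; simpl. group. rewrite IH. group. Qed.

Lemma eval_word_app (w1 w2 : list (bool * G)) :
  eval_word G (w1 ++ w2) = eval_word G w1 * eval_word G w2.
Proof. unfold eval_word. rewrite map_app. apply gprod_app. Qed.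

Definition flip_letter (e : bool * G) : bool * G := (negb (fst e), snd e).

Lemma eval_word_rev_flip (w : list (bool * G)) :
  eval_word G (rev (map flip_letter w)) = (eval_word G w)^-1.
Proof.
  induction w as [|[b x] w IH]; simpl. unfold eval_word; simpl; group.
  rewrite eval_word_app, IH. unfold eval_word; simpl.
  unfold letter, flip_letter; destruct b; simpl; group.
Qed.

Lemma gpow_S_r (x : G) n : gpow G x (S n) = gpow G x n * x.
Proof. induction n as [|n IH]; simpl. group. simpl in IH. rewrite IH at 1. group. Qed.

Lemma gpow_inv (x : G) n : gpow G (x^-1) n = (gpow G x n)^-1.
Proof. induction n as [|n IH]. simpl. group. rewrite gpow_S_r. simpl. rewrite IH. group. Qed.

Lemma zpow_of_nat (x : G) n : x ^^ Z.of_nat n = gpow G x n.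
Proof. destruct n; simpl; [|rewrite SuccNat2Pos.id_succ]; reflexivity. Qed.

Lemma zpow_opp (x : G) z : x ^^ (- z) = (x ^^ z)^-1.
Proof.
  destruct z; simpl. group.
  - apply gpow_inv.
  - rewrite gpow_inv. group.
Qed.

Lemma zpow_succ (x : G) z : x ^^ (z + 1) = x ^^ z * x.
Proof.
  destruct (Z_le_gt_dec 0 z).
  - replace z with (Z.of_nat (Z.to_nat z)) by lia.
    replace (Z.of_nat (Z.to_nat z) + 1)%Z with (Z.of_nat (S (Z.to_nat z))) by lia.
    rewrite !zpow_of_nat. apply gpow_S_r.
  - replace z with (- Z.of_nat (S (Z.to_nat (- z - 1))))%Z by lia.
    replace (- Z.of_nat (S (Z.to_nat (- z - 1))) + 1)%Z
      with (- Z.of_nat (Z.to_nat (- z - 1)))%Z by lia.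
    rewrite !zpow_opp, !zpow_of_nat. simpl. group.
Qed.

Lemma zpow_pred (x : G) z : x ^^ (z - 1) = x ^^ z * x^-1.
Proof. replace (x ^^ z) with (x ^^ (z - 1 + 1)) by (f_equal; lia). rewrite zpow_succ. group. Qed.

Lemma zpow_add (x : G) i j : x ^^ (i + j) = x ^^ i * x ^^ j.
Proof.
  induction j as [|j IH|j IH] using Z.peano_ind.
  - rewrite Z.add_0_r. simpl. group.
  - rewrite Z.add_succ_r, <- !Z.add_1_r, !zpow_succ, IH. group.
  - rewrite Z.add_pred_r, <- !Z.sub_1_r, !zpow_pred, IH. group.
Qed.

Lemma zpow_1 (x : G) : x ^^ 1 = x.
Proof. simpl. group. Qed.

Section Generated.
Variable S : G -> Prop.

Lemma gen_monoid_1 : gen_monoid G S one.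
Proof. exists []. split. intros z []. reflexivity. Qed.

Lemma gen_monoid_in x : S x -> gen_monoid G S x.
Proof. intros. exists [x]. split. intros z [<-|[]]; auto. simpl. group. Qed.

Lemma gen_monoid_mul x y : gen_monoid G S x -> gen_monoid G S y -> gen_monoid G S (x * y).
Proof.
  intros [l1 [H1 <-]] [l2 [H2 <-]]. exists (l1 ++ l2). split.
  - intros z Hz. apply in_app_or in Hz. destruct Hz; auto.
  - apply gprod_app.
Qed.

Lemma gen_monoid_ind (P : G -> Prop) :
  P one -> (forall s x, S s -> gen_monoid G S x -> P x -> P (s * x)) ->
  forall x, gen_monoid G S x -> P x.
Proof.
  intros P1 Pmul x [l [Hl <-]]. induction l as [|s l IH]; simpl; auto.
  apply Pmul. apply Hl; left; auto. exists l; split; auto; intros; apply Hl; right; auto.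
  apply IH. intros; apply Hl; right; auto.
Qed.

Lemma gen_monoid_conj x :
  (forall s, S s -> S (x * s * x^-1)) ->
  forall b, gen_monoid G S b -> gen_monoid G S (x * b * x^-1).
Proof.
  intros HS. apply gen_monoid_ind.
  - replace (x * one * x^-1) with one by group. apply gen_monoid_1.
  - intros s b Hs _ IH.
    replace (x * (s * b) * x^-1) with ((x * s * x^-1) * (x * b * x^-1)) by group.
    apply gen_monoid_mul; auto. apply gen_monoid_in; auto.
Qed.

Lemma gen_group_1 : gen_group G S one.
Proof. exists []. split. intros e []. reflexivity. Qed.

Lemma gen_group_in x : S x -> gen_group G S x.
Proof.
  intros. exists [(true, x)]. split. intros e [<-|[]]; auto. unfold eval_word; simpl; group.
Qed.

Lemma gen_group_mul x y : gen_group G S x -> gen_group G S y -> gen_group G S (x * y).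
Proof.
  intros [w1 [H1 <-]] [w2 [H2 <-]]. exists (w1 ++ w2). split.
  - intros e He. apply in_app_or in He. destruct He; auto.
  - apply eval_word_app.
Qed.

Lemma gen_group_inv x : gen_group G S x -> gen_group G S (x^-1).
Proof.
  intros [w [Hw <-]]. exists (rev (map flip_letter w)). split.
  - intros e He. rewrite <- in_rev in He. apply in_map_iff in He.
    destruct He as [e' [<- He']]. exact (Hw e' He').
  - apply eval_word_rev_flip.
Qed.

Lemma gen_group_of_monoid x : gen_monoid G S x -> gen_group G S x.
Proof.
  apply gen_monoid_ind.
  - apply gen_group_1.
  - intros s y Hs _ Hy. apply gen_group_mul; auto. apply gen_group_in; auto.
Qed.

End Generated.
End Products.

Section LatticeOrder.
Variable G : Grp.
Local Notation "x * y" := (@gmul G x y).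
Local Notation "x ^-1" := (@ginv G x) (at level 3, format "x ^-1").
Local Notation one := (@gone G).
Variable M : G -> Prop.
Hypothesis M_one : M one.
Hypothesis M_mul : forall x y, M x -> M y -> M (x * y).
Hypothesis M_pointed : pointed G M.
Hypothesis M_lattice : latticeL G M.
Local Notation "x ≼ y" := (leL G M x y) (at level 70).
Local Notation "x ^^ z" := (zpow G x z) (at level 30).

Lemma leL_refl x : x ≼ x.
Proof. unfold leL. rewrite gmulVx. exact M_one. Qed.

Lemma leL_trans x y z : x ≼ y -> y ≼ z -> x ≼ z.
Proof. unfold leL; intros. replace (x^-1 * z) with ((x^-1 * y) * (y^-1 * z)) by group. auto. Qed.

Lemma leL_antisym x y : x ≼ y -> y ≼ x -> x = y.
Proof.
  unfold leL; intros Hxy Hyx.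
  assert (E : x^-1 * y = one).
  { apply M_pointed; auto. replace ((x^-1 * y)^-1) with (y^-1 * x) by group. auto. }
  rewrite <- (mul_inv_mul G x y), E. group.
Qed.

Lemma leL_mull g x y : x ≼ y -> g * x ≼ g * y.
Proof. unfold leL. replace ((g * x)^-1 * (g * y)) with (x^-1 * y) by group. auto. Qed.

Lemma leL_mull_cancel g x y : g * x ≼ g * y -> x ≼ y.
Proof. unfold leL. replace ((g * x)^-1 * (g * y)) with (x^-1 * y) by group. auto. Qed.

Lemma leL_mulr x m : M m -> x ≼ x * m.
Proof. unfold leL. intros. autorewrite with group_simpl. auto. Qed.

Lemma leL_1_of_M x : M x -> one ≼ x.
Proof. unfold leL. rewrite inv_one, gmul1x. auto. Qed.

Lemma M_of_leL_1 x : one ≼ x -> M x.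
Proof. unfold leL. rewrite inv_one, gmul1x. auto. Qed.

Lemma leL_1_of_Minv x : M (x^-1) -> x ≼ one.
Proof. unfold leL. rewrite gmulx1. auto. Qed.

Lemma Minv_of_leL_1 x : x ≼ one -> M (x^-1).
Proof. unfold leL. rewrite gmulx1. auto. Qed.

Lemma eq1_of_M_leL_1 x : M x -> x ≼ one -> x = one.
Proof. intros. apply leL_antisym; auto. apply leL_1_of_M; auto. Qed.

Definition join (a b : G) : G :=
  proj1_sig (constructive_indefinite_description _ (proj2 (M_lattice a b))).
Definition meet (a b : G) : G :=
  proj1_sig (constructive_indefinite_description _ (proj1 (M_lattice a b))).

Lemma join_spec a b : is_joinL G M (join a b) a b.
Proof. unfold join. destruct constructive_indefinite_description; auto. Qed.
Lemma meet_spec a b : is_meetL G M (meet a b) a b.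
Proof. unfold meet. destruct constructive_indefinite_description; auto. Qed.

Lemma join_l a b : a ≼ join a b. Proof. apply join_spec. Qed.
Lemma join_r a b : b ≼ join a b. Proof. apply join_spec. Qed.
Lemma join_lub a b c : a ≼ c -> b ≼ c -> join a b ≼ c. Proof. apply join_spec. Qed.
Lemma meet_l a b : meet a b ≼ a. Proof. apply meet_spec. Qed.
Lemma meet_r a b : meet a b ≼ b. Proof. apply meet_spec. Qed.
Lemma meet_glb a b c : c ≼ a -> c ≼ b -> c ≼ meet a b. Proof. apply meet_spec. Qed.

Lemma mul_join g a b : g * join a b = join (g * a) (g * b).
Proof.
  apply leL_antisym.
  - rewrite <- (mul_inv_mul G g (join (g * a) (g * b))). apply leL_mull.
    apply join_lub; apply (leL_mull_cancel g); rewrite mul_inv_mul; [apply join_l|apply join_r].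
  - apply join_lub; apply leL_mull; [apply join_l|apply join_r].
Qed.

Lemma mul_meet g a b : g * meet a b = meet (g * a) (g * b).
Proof.
  apply leL_antisym.
  - apply meet_glb; apply leL_mull; [apply meet_l|apply meet_r].
  - rewrite <- (mul_inv_mul G g (meet (g * a) (g * b))). apply leL_mull.
    apply meet_glb; apply (leL_mull_cancel g); rewrite mul_inv_mul; [apply meet_l|apply meet_r].
Qed.

Lemma joinC a b : join a b = join b a.
Proof. apply leL_antisym; apply join_lub; (apply join_l || apply join_r). Qed.

Lemma join_idPr a b : a ≼ b -> join a b = b.
Proof. intro. apply leL_antisym. apply join_lub; auto using leL_refl. apply join_r. Qed.

Lemma join_idPl a b : b ≼ a -> join a b = a.
Proof. intro. rewrite joinC. apply join_idPr; auto. Qed.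

Definition rcompl (x y : G) : G := join one (x^-1 * y).

Lemma mul_rcompl x y : x * rcompl x y = join x y.
Proof. unfold rcompl. rewrite mul_join. f_equal; group. Qed.

Lemma M_rcompl x y : M (rcompl x y).
Proof. apply M_of_leL_1. apply join_l. Qed.

Lemma rcompl_1l y : M y -> rcompl one y = y.
Proof. intro. unfold rcompl. rewrite inv_one, gmul1x. apply join_idPr. apply leL_1_of_M; auto. Qed.

Lemma rcompl_1r y : M y -> rcompl y one = one.
Proof.
  intro. unfold rcompl. rewrite gmulx1. apply join_idPl. apply leL_1_of_Minv. rewrite inv_inv; auto.
Qed.

Lemma rcompl_le x y : x ≼ y -> rcompl x y = x^-1 * y.
Proof. intro. unfold rcompl. apply join_idPr. apply leL_1_of_M; auto. Qed.

Lemma rcompl_mull x1 x2 y : M x2 -> rcompl (x1 * x2) y = rcompl x2 (rcompl x1 y).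
Proof.
  intro Hx2. unfold rcompl at 2 3. rewrite (mul_join (x2^-1)), gmulx1.
  replace (x2^-1 * (x1^-1 * y)) with ((x1 * x2)^-1 * y) by group.
  apply leL_antisym.
  - apply join_lub. apply join_l. eapply leL_trans; [|apply join_r]. apply join_r.
  - apply join_lub. apply join_l. apply join_lub. 
    + eapply leL_trans; [|apply join_l]. apply leL_1_of_Minv. rewrite inv_inv. auto.
    + apply join_r.
Qed.

Lemma rcompl_mulr x y1 y2 : M y2 -> rcompl x (y1 * y2) = rcompl x y1 * rcompl (rcompl y1 x) y2.
Proof.
  intro Hy2.
  assert (E : rcompl x y1 * (rcompl y1 x)^-1 = x^-1 * y1).
  { assert (E1 : x * rcompl x y1 = y1 * rcompl y1 x) by (rewrite !mul_rcompl; apply joinC).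
    replace (rcompl x y1) with (x^-1 * (y1 * rcompl y1 x)) by (rewrite <- E1; group). group. }
  unfold rcompl at 3. rewrite mul_join, gmulx1.
  replace (rcompl x y1 * ((rcompl y1 x)^-1 * y2)) with (x^-1 * y1 * y2) by (rewrite <- E; group).
  unfold rcompl. replace (x^-1 * (y1 * y2)) with (x^-1 * y1 * y2) by group.
  apply leL_antisym.
  - apply join_lub.
    + eapply leL_trans; [|apply join_l]. apply join_l.
    + apply join_r.
  - apply join_lub; [apply join_lub|].
    + apply join_l.
    + eapply leL_trans; [|apply join_r]. apply leL_mulr; auto.
    + apply join_r.
Qed.

Lemma Div_self x : balanced G M x -> Div G M x x.
Proof. intros [Hx _]. split; auto. apply leL_refl. Qed.

Lemma Div_compl_l x s : balanced G M x -> Div G M x s -> Div G M x (s^-1 * x).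
Proof.
  intros [_ Hb] [Hs Hsx]. apply Hb. split; auto. unfold leR.
  replace (x * (s^-1 * x)^-1) with s by group. auto.
Qed.

Lemma Div_compl_r x s : balanced G M x -> Div G M x s -> Div G M x (x * s^-1).
Proof.
  intros [_ Hb] Hs. apply Hb in Hs. destruct Hs as [Hs Hsx]. split; auto. unfold leL.
  replace ((x * s^-1)^-1 * x) with s by group. auto.
Qed.

Lemma Div_conj x s : balanced G M x -> Div G M x s -> Div G M x (x * s * x^-1).
Proof.
  intros. replace (x * s * x^-1) with (x * (x * s^-1)^-1) by group.
  apply Div_compl_r; auto. apply Div_compl_r; auto.
Qed.

Lemma Div_conjV x s : balanced G M x -> Div G M x s -> Div G M x (x^-1 * s * x).
Proof.
  intros. replace (x^-1 * s * x) with ((s^-1 * x)^-1 * x) by group.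
  apply Div_compl_l; auto. apply Div_compl_l; auto.
Qed.

Lemma Div_rcompl x s t : balanced G M x -> Div G M x s -> Div G M x t -> Div G M x (rcompl s t).
Proof.
  intros Hb Hs Ht. split. apply M_rcompl.
  apply leL_trans with (s^-1 * x).
  - apply (leL_mull_cancel s). rewrite mul_rcompl, mul_inv_mul. apply join_lub; [apply Hs|apply Ht].
  - apply Div_compl_l; auto.
Qed.

Section Garside.
Variable D : G.
Hypothesis D_balanced : balanced G M D.
Hypothesis M_gen : forall b, M b <-> gen_monoid G (Div G M D) b.

Lemma M_D : M D.
Proof. exact (proj1 D_balanced). Qed.

Lemma M_D_mulV x : Div G M D x -> M (D * x^-1).
Proof. intro Hx. apply D_balanced in Hx. apply Hx. Qed.

Lemma M_conjD m : M m -> M (D * m * D^-1).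
Proof.
  intro Hm. apply M_gen, gen_monoid_conj; [|apply M_gen; auto].
  intros; apply Div_conj; auto.
Qed.

Lemma M_conjDV m : M m -> M (D^-1 * m * D).
Proof.
  intro Hm. replace (D^-1 * m * D) with (D^-1 * m * (D^-1)^-1) by group.
  apply M_gen, gen_monoid_conj; [|apply M_gen; auto].
  intros s Hs. rewrite inv_inv. apply Div_conjV; auto.
Qed.

Lemma M_conj_zpow z m : M m -> M ((D ^^ z)^-1 * m * D ^^ z).
Proof.
  revert m. induction z as [|z IH|z IH] using Z.peano_ind; intros m Hm.
  - simpl. autorewrite with group_simpl. auto.
  - rewrite <- Z.add_1_r, zpow_succ.
    replace ((D ^^ z * D)^-1 * m * (D ^^ z * D)) with (D^-1 * ((D ^^ z)^-1 * m * D ^^ z) * D)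
      by group.
    apply M_conjDV, IH; auto.
  - rewrite <- Z.sub_1_r, zpow_pred.
    replace ((D ^^ z * D^-1)^-1 * m * (D ^^ z * D^-1)) with (D * ((D ^^ z)^-1 * m * D ^^ z) * D^-1)
      by group.
    apply M_conjD, IH; auto.
Qed.

Lemma leL_mulr_zpow z x y : x ≼ y -> x * D ^^ z ≼ y * D ^^ z.
Proof.
  unfold leL. intro.
  replace ((x * D ^^ z)^-1 * (y * D ^^ z)) with ((D ^^ z)^-1 * (x^-1 * y) * D ^^ z) by group.
  apply M_conj_zpow; auto.
Qed.

Lemma M_zpow_nat n : M (D ^^ Z.of_nat n).
Proof. rewrite zpow_of_nat. induction n; simpl; auto. apply M_mul; auto. apply M_D. Qed.

Lemma zpow_mono i j : (i <= j)%Z -> D ^^ i ≼ D ^^ j.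
Proof.
  intro. unfold leL. rewrite <- zpow_opp, <- zpow_add.
  replace (- i + j)%Z with (Z.of_nat (Z.to_nat (j - i))) by lia. apply M_zpow_nat.
Qed.

Lemma leL_zpow_iff_leR z g : g ≼ D ^^ z <-> leR G M g (D ^^ z).
Proof.
  unfold leL, leR. split; intro Hg.
  - apply (M_conj_zpow (- z)) in Hg. rewrite zpow_opp in Hg.
    autorewrite with group_simpl in Hg. auto.
  - apply (M_conj_zpow z) in Hg. autorewrite with group_simpl in Hg. auto.
Qed.

Lemma simples_of_le_zpow (t : nat) a :
  M a -> a ≼ D ^^ Z.of_nat t ->
  exists l, (forall z, In z l -> Div G M D z) /\ (length l <= t)%nat /\ gprod G l = a.
Proof.
  revert a. induction t as [|t IH]; intros a Ma Hle.
  - exists []. split; [intros z []|split; simpl; [lia|]].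
    symmetry. apply eq1_of_M_leL_1; auto.
  - rewrite Nat2Z.inj_succ, <- Z.add_1_r, zpow_succ in Hle.
    set (a1 := meet a (D ^^ Z.of_nat t)).
    assert (Ma1 : M a1).
    { apply M_of_leL_1, meet_glb; apply leL_1_of_M; auto. apply M_zpow_nat. }
    assert (Ha1 : a ≼ a1 * D).
    { assert (H1 : a * D^-1 ≼ a1).
      { apply meet_glb.
        - unfold leL. replace ((a * D^-1)^-1 * a) with D by group. apply M_D.
        - apply (leL_mulr_zpow (Z.opp 1)) in Hle. rewrite zpow_opp, zpow_1 in Hle.
          autorewrite with group_simpl in Hle |- *. auto. }
      apply (leL_mulr_zpow 1) in H1. rewrite zpow_1 in H1.
      autorewrite with group_simpl in H1. auto. }
    destruct (IH a1 Ma1 (meet_r _ _)) as [l [Hl [Hlen Hprod]]].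
    exists (l ++ [a1^-1 * a]). split; [|split].
    + intros z Hz. apply in_app_or in Hz. destruct Hz as [Hz|[<-|[]]]; auto.
      split. apply (meet_l a (D ^^ Z.of_nat t)).
      unfold leL in *. replace ((a1^-1 * a)^-1 * D) with (a^-1 * (a1 * D)) by group. auto.
    + rewrite length_app; simpl; lia.
    + rewrite gprod_app, Hprod. simpl. group.
Qed.

Lemma simple_mul_zpow_bounds x z :
  Div G M D x -> D ^^ z ≼ x * D ^^ z /\ x * D ^^ z ≼ D ^^ (z + 1).
Proof.
  intros [Mx HxD]. unfold leL in *. rewrite Z.add_comm, zpow_add, zpow_1. split.
  - replace ((D ^^ z)^-1 * (x * D ^^ z)) with ((D ^^ z)^-1 * x * D ^^ z) by group.
    apply M_conj_zpow; auto.
  - replace ((x * D ^^ z)^-1 * (D * D ^^ z)) with ((D ^^ z)^-1 * (x^-1 * D) * D ^^ z) by group.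
    apply M_conj_zpow; auto.
Qed.

Lemma simple_inv_mul_zpow_bounds x z :
  Div G M D x -> D ^^ (z - 1) ≼ x^-1 * D ^^ z /\ x^-1 * D ^^ z ≼ D ^^ z.
Proof.
  intros Hx. unfold leL.
  replace (z - 1)%Z with (- (1) + z)%Z by lia. rewrite zpow_add, zpow_opp, zpow_1. split.
  - replace ((D^-1 * D ^^ z)^-1 * (x^-1 * D ^^ z)) with ((D ^^ z)^-1 * (D * x^-1) * D ^^ z)
      by group.
    apply M_conj_zpow, M_D_mulV; auto.
  - replace ((x^-1 * D ^^ z)^-1 * D ^^ z) with ((D ^^ z)^-1 * x * D ^^ z) by group.
    apply M_conj_zpow, Hx.
Qed.

Lemma word_bounds w b :
  represents G M D w b ->
  exists i s, D ^^ i ≼ b /\ b ≼ D ^^ s /\ (Z.max s 0 + Z.max (- i) 0 <= Z.of_nat (length w))%Z.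
Proof.
  revert b. induction w as [|[sgn x] w IH]; intros b [Hw <-].
  - exists 0%Z, 0%Z. split; [|split]; try apply leL_refl. simpl; lia.
  - assert (Hx : Div G M D x) by (apply (Hw (sgn, x)); left; auto).
    destruct (IH (eval_word G w)) as [i [s [Hi [Hs Hlen]]]].
    { split; auto. intros; apply Hw; right; auto. }
    unfold eval_word; simpl; fold (eval_word G w).
    apply (leL_mull (letter G (sgn, x))) in Hi, Hs.
    destruct sgn; unfold letter in *; simpl in *.
    + destruct (simple_mul_zpow_bounds x i Hx) as [Hi' _].
      destruct (simple_mul_zpow_bounds x s Hx) as [_ Hs'].
      exists i, (s + 1)%Z. split; [|split]; [eapply leL_trans; eauto..|lia].
    + destruct (simple_inv_mul_zpow_bounds x i Hx) as [Hi' _].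
      destruct (simple_inv_mul_zpow_bounds x s Hx) as [_ Hs'].
      exists (i - 1)%Z, s. split; [|split]; [eapply leL_trans; eauto..|lia].
Qed.

Lemma represents_of_simple_word pw :
  (forall e, In e pw -> Div G M D (snd e)) ->
  exists w, represents G M D w (eval_word G pw) /\ (length w <= length pw)%nat.
Proof.
  induction pw as [|[sgn x] pw IH]; intros Hpw.
  - exists []. split; [split; [intros e []|reflexivity]|auto].
  - destruct IH as [w [[Hw Ew] Hlen]]. { intros; apply Hpw; right; auto. }
    destruct (classic (x = one)) as [->|Hx1].
    + exists w. split; [split; auto|simpl; lia].
      rewrite Ew. unfold eval_word; simpl. unfold letter; destruct sgn; simpl; group.
    + exists ((sgn, x) :: w). split; [split|simpl; lia].
      * intros e [<-|He]; auto. split; auto. apply (Hpw (sgn, x)); left; auto.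
      * unfold eval_word in *; simpl. rewrite Ew. reflexivity.
Qed.

(* Each simple s of L is paired with one D^-1 through s * D^-1 = (D * s^-1)^-1;
   the rest of L is conjugated by D as it moves past. *)
Lemma simple_word_simples_zpow n : forall L k,
  length L = n -> (forall z, In z L -> Div G M D z) ->
  exists pw, (forall e, In e pw -> Div G M D (snd e)) /\
    eval_word G pw = gprod G L * D ^^ (- Z.of_nat k) /\ (length pw <= Nat.max n k)%nat.
Proof.
  induction n as [|n IH]; intros L k Hlen HL.
  - destruct L; try discriminate. exists (repeat (false, D) k). split; [|split].
    + intros e He. apply repeat_spec in He. subst e. apply Div_self; auto.
    + rewrite zpow_opp, zpow_of_nat, <- gpow_inv. simpl. rewrite gmul1x.
      induction k as [|k IHk]; auto. unfold eval_word in *; simpl. rewrite IHk. reflexivity.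
    + rewrite repeat_length. lia.
  - destruct L as [|s L]; try discriminate. injection Hlen as Hlen.
    assert (Hs : Div G M D s) by (apply HL; left; auto).
    destruct k as [|k].
    + destruct (IH L 0%nat Hlen (fun z Hz => HL z (or_intror Hz))) as [pw [Hpw [Epw Lpw]]].
      exists ((true, s) :: pw). split; [intros e [<-|He]; auto|split; [|simpl; lia]].
      unfold eval_word in *; simpl in *. rewrite Epw. group.
    + set (L' := map (fun z => D * z * D^-1) L).
      assert (EL' : gprod G L' = D * gprod G L * D^-1).
      { unfold L'. clear. induction L as [|z L IH]; simpl. group. rewrite IH. group. }
      assert (HL' : forall z, In z L' -> Div G M D z).
      { intros z Hz. apply in_map_iff in Hz. destruct Hz as [z' [<- Hz']].
        apply Div_conj; auto. apply HL; right; auto. }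
      destruct (IH L' k (eq_trans (length_map _ _) Hlen) HL') as [pw [Hpw [Epw Lpw]]].
      exists ((false, D * s^-1) :: pw). split; [|split; [|simpl; lia]].
      * intros e [<-|He]; auto. apply Div_compl_r; auto.
      * replace (- Z.of_nat (S k))%Z with (- (1) + - Z.of_nat k)%Z by lia.
        rewrite zpow_add, (zpow_opp G D 1), zpow_1.
        unfold eval_word in *; simpl. rewrite Epw, EL'. unfold letter; simpl. group.
Qed.

Lemma represents_simples_zpow L k :
  (forall z, In z L -> Div G M D z) ->
  exists w, represents G M D w (gprod G L * D ^^ (- Z.of_nat k)) /\
    (length w <= Nat.max (length L) k)%nat.
Proof.
  intro HL. destruct (simple_word_simples_zpow _ L k eq_refl HL) as [pw [Hpw [<- Lpw]]].
  destruct (represents_of_simple_word pw Hpw) as [w [Hw Lw]].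
  exists w. split; auto. lia.
Qed.

Lemma represents_of_zpow_form a p t :
  M a -> (p <= 0)%Z -> a ≼ D ^^ Z.of_nat t ->
  exists w, represents G M D w (a * D ^^ p) /\ (length w <= Nat.max t (Z.to_nat (- p)))%nat.
Proof.
  intros Ma Hp Hle. destruct (simples_of_le_zpow t a Ma Hle) as [L [HL [Hlen <-]]].
  destruct (represents_simples_zpow L (Z.to_nat (- p)) HL) as [w [Hw Lw]].
  replace (- Z.of_nat (Z.to_nat (- p)))%Z with p in Hw by lia.
  exists w. split; auto. lia.
Qed.

Section Parabolic.
Variable d : G.
Hypothesis d_balanced : balanced G M d.
Hypothesis Div_d_iff : forall b, Div G M d b <-> (Div G M D b /\ parN G M d b).
Local Notation N := (gen_monoid G (Div G M d)).
Local Notation H := (gen_group G (Div G M d)).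
Local Notation ω := (omega G D d).

Lemma Div_d_Div_D s : Div G M d s -> Div G M D s.
Proof. intro Hs. apply Div_d_iff in Hs. apply Hs. Qed.

Lemma M_d : M d.
Proof. exact (proj1 d_balanced). Qed.

Lemma N_M x : N x -> M x.
Proof.
  intro Hx. induction Hx as [|s x Hs _ IH] using gen_monoid_ind; auto. apply M_mul; auto. apply Hs.
Qed.

Lemma N_Div_rcompl y : N y ->
  forall s, Div G M d s -> N (rcompl s y) /\ Div G M d (rcompl y s).
Proof.
  intro Hy. induction Hy as [|t y Ht Hy IH] using gen_monoid_ind; intros s Hs.
  - rewrite rcompl_1r, rcompl_1l by apply Hs. split; auto. apply gen_monoid_1.
  - assert (My : M y) by (apply N_M; auto).
    rewrite rcompl_mulr, rcompl_mull by auto.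
    destruct (IH (rcompl t s)) as [IH1 IH2]; [apply Div_rcompl; auto|].
    split; auto. apply gen_monoid_mul; auto. apply gen_monoid_in, Div_rcompl; auto.
Qed.

Lemma N_rcompl_both x : N x -> forall y, N y -> N (rcompl x y) /\ N (rcompl y x).
Proof.
  intro Hx. induction Hx as [|s x Hs Hx IH] using gen_monoid_ind; intros y Hy.
  - rewrite rcompl_1r, rcompl_1l by (apply N_M; auto). split; auto. apply gen_monoid_1.
  - assert (Mx : M x) by (apply N_M; auto).
    destruct (N_Div_rcompl y Hy s Hs) as [Hsy Hys].
    destruct (IH (rcompl s y) Hsy) as [IH1 IH2].
    rewrite rcompl_mulr, rcompl_mull by auto.
    split; auto. apply gen_monoid_mul; auto. apply gen_monoid_in; auto.
Qed.

Lemma N_rcompl x y : N x -> N y -> N (rcompl x y).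
Proof. intros Hx Hy. apply (N_rcompl_both x Hx y Hy). Qed.

Lemma N_ldiv x n : N x -> N n -> x ≼ n -> N (x^-1 * n).
Proof. intros. rewrite <- rcompl_le; auto. apply N_rcompl; auto. Qed.

Lemma Div_d_of_le_N n : N n -> forall s, Div G M D s -> s ≼ n -> Div G M d s.
Proof.
  intro Hn. induction Hn as [|t n Ht Hn IH] using gen_monoid_ind; intros s Hs Hsn.
  - rewrite (eq1_of_M_leL_1 s) by (apply Hs || auto).
    split; auto. apply leL_1_of_M, M_d.
  - assert (Htn : t ≼ t * n) by (apply leL_mulr, N_M; auto).
    assert (HtD : Div G M D t) by (apply Div_d_Div_D; auto).
    assert (Hjoin : join t s ≼ t * n) by (apply join_lub; auto).
    assert (Hr : Div G M d (rcompl t s)).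
    { apply IH. apply Div_rcompl; auto.
      apply (leL_mull_cancel t). rewrite mul_rcompl. auto. }
    assert (Hj : Div G M d (join t s)).
    { apply Div_d_iff. split.
      - split. apply M_of_leL_1, leL_trans with t; [apply leL_1_of_M, Ht|apply join_l].
        apply join_lub; [apply HtD|apply Hs].
      - rewrite <- mul_rcompl. apply gen_monoid_mul; apply gen_monoid_in; auto. }
    split. apply Hs. apply leL_trans with (join t s); [apply join_r|apply Hj].
Qed.

Lemma N_of_le_N m n : M m -> N n -> m ≼ n -> N m.
Proof.
  intros Hm. apply M_gen in Hm. revert n.
  induction Hm as [|s m Hs Hm IH] using gen_monoid_ind; intros n Hn Hle.
  - apply gen_monoid_1.
  - assert (Hsn : s ≼ n) by (eapply leL_trans; [apply leL_mulr, M_gen|]; eauto).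
    assert (Hsd : Div G M d s) by (apply (Div_d_of_le_N n); auto).
    apply gen_monoid_mul. apply gen_monoid_in; auto.
    apply IH with (s^-1 * n).
    + apply N_ldiv; auto. apply gen_monoid_in; auto.
    + apply (leL_mull_cancel s). rewrite mul_inv_mul. auto.
Qed.

Lemma H_d : H d.
Proof. apply gen_group_in, Div_self; auto. Qed.

Lemma H_fraction h : H h -> exists x y, N x /\ N y /\ h = x^-1 * y.
Proof.
  intros [w [Hw <-]]. induction w as [|[sgn s] w IH].
  - exists one, one. split; [|split]; try apply gen_monoid_1. unfold eval_word; simpl; group.
  - destruct IH as [x [y [Hx [Hy E]]]]. { intros; apply Hw; right; auto. }
    assert (Hs : Div G M d s) by (apply (Hw (sgn, s)); left; auto).
    unfold eval_word in *; simpl. rewrite E. destruct sgn; simpl.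
    (* s^-1 = (s^-1 d) d^-1 with s^-1 d in Div(d); conjugating by d absorbs d^-1. *)
    + exists (d * (x * (s^-1 * d)) * d^-1), (d * y). split; [|split].
      * apply gen_monoid_conj; [intros; apply Div_conj; auto|].
        apply gen_monoid_mul; auto. apply gen_monoid_in, Div_compl_l; auto.
      * apply gen_monoid_mul; auto. apply gen_monoid_in, Div_self; auto.
      * group.
    + exists (x * s), y. split; [|split]; auto. apply gen_monoid_mul; auto.
      apply gen_monoid_in; auto. group.
Qed.

Lemma N_join1_H h : H h -> N (join one h).
Proof. intro Hh. destruct (H_fraction h Hh) as [x [y [Hx [Hy ->]]]]. apply N_rcompl; auto. Qed.

Lemma N_of_H_M h : H h -> M h -> N h.
Proof.
  intros Hh Mh. rewrite <- (join_idPr one h). apply N_join1_H; auto. apply leL_1_of_M; auto.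
Qed.

Lemma H_meet1 h : H h -> H (meet one h).
Proof.
  intro Hh. destruct (H_fraction h Hh) as [x [y [Hx [Hy ->]]]].
  replace (meet one (x^-1 * y)) with (x^-1 * meet x y) by (rewrite mul_meet; f_equal; group).
  apply gen_group_mul; [apply gen_group_inv|]; apply gen_group_of_monoid; auto.
  apply N_of_le_N with x; auto; [|apply meet_l].
  apply M_of_leL_1, meet_glb; apply leL_1_of_M, N_M; auto.
Qed.

Section Reduced.
Variable a : G.
Hypothesis a_reduced : N_reduced G M d a.

Lemma N_reduced_N_le_eq1 x : N x -> x ≼ a -> x = one.
Proof.
  destruct a_reduced as [Ma [_ [_ Hmeet]]]. intro Hx.
  induction Hx as [|t x Ht Hx IH] using gen_monoid_ind; intro Hle; auto.
  assert (Et : t = one).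
  { apply eq1_of_M_leL_1; [apply Ht|]. apply Hmeet; [|apply Ht].
    eapply leL_trans; [|apply Hle]. apply leL_mulr, N_M; auto. }
  subst t. rewrite gmul1x in *. auto.
Qed.

Lemma leL_1_of_N_reduced_H h v : H h -> v ≼ a -> v ≼ h -> v ≼ one.
Proof.
  intros Hh Hva Hvh.
  assert (E : join one v = one).
  { apply N_reduced_N_le_eq1.
    - apply N_of_le_N with (join one h); [apply M_of_leL_1, join_l|apply N_join1_H; auto|].
      apply join_lub; [apply join_l|]. eapply leL_trans; [apply Hvh|apply join_r].
    - apply join_lub; auto. apply leL_1_of_M, a_reduced. }
  rewrite <- E. apply join_r.
Qed.

Lemma N_reduced_le_zpow h t :
  H h -> h * a ≼ D ^^ Z.of_nat t -> a ≼ D ^^ Z.of_nat t.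
Proof.
  intros Hh Hle. apply leL_zpow_iff_leR in Hle. apply leL_zpow_iff_leR. unfold leR in *.
  set (P := D ^^ Z.of_nat t) in *.
  assert (Hv : a * P^-1 ≼ one).
  { apply leL_1_of_N_reduced_H with (h^-1); [apply gen_group_inv; auto| |]; unfold leL.
    - replace ((a * P^-1)^-1 * a) with P by group. apply M_zpow_nat.
    - replace ((a * P^-1)^-1 * h^-1) with (P * (h * a)^-1) by group. auto. }
  apply Minv_of_leL_1 in Hv. autorewrite with group_simpl in Hv. auto.
Qed.

End Reduced.

Lemma M_d_mul_of_M_D_mul k : H k -> M (D * k) -> M (d * k).
Proof.
  intros Hk MDk. set (m := meet one (d * k)).
  assert (Hm : H m) by (apply H_meet1, gen_group_mul; auto; apply H_d).
  assert (MDd : M (D * d^-1)) by (apply M_D_mulV, Div_d_Div_D, Div_self; auto).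
  assert (Hle : (D * d^-1)^-1 ≼ m).
  { apply meet_glb.
    - apply leL_1_of_Minv. rewrite inv_inv. auto.
    - unfold leL. replace ((D * d^-1)^-1^-1 * (d * k)) with (D * k) by group. auto. }
  assert (Mminv : M (m^-1)) by (apply Minv_of_leL_1, meet_l).
  assert (Hmd : Div G M d (m^-1 * d)).
  { apply Div_d_iff. split.
    - apply D_balanced. split. apply M_mul; auto. apply M_d.
      unfold leR. unfold leL in Hle.
      replace (D * (m^-1 * d)^-1) with ((D * d^-1)^-1^-1 * m) by group. auto.
    - apply gen_monoid_mul; [apply N_of_H_M; auto; apply gen_group_inv; auto|].
      apply gen_monoid_in, Div_self; auto. }
  apply d_balanced in Hmd. destruct Hmd as [_ Hmd]. unfold leR in Hmd.
  replace (d * (m^-1 * d)^-1) with m in Hmd by group.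
  assert (Em : m = one) by (apply eq1_of_M_leL_1; auto; apply leL_1_of_Minv; auto).
  apply M_of_leL_1. rewrite <- Em. apply meet_r.
Qed.

Lemma omega_le_D : ω ≼ D.
Proof.
  unfold leL, omega. replace ((d^-1 * D)^-1 * D) with (D^-1 * d * D) by group.
  apply M_conjDV, M_d.
Qed.

Lemma simple_omega_le s z : Div G M d s -> s ≼ z -> ω ≼ z -> s * ω ≼ z.
Proof.
  intros Hs Hsz Hoz. set (u := join s ω).
  apply leL_trans with u; [|apply join_lub; auto].
  assert (HuD : u ≼ D) by (apply join_lub; [apply Div_d_Div_D; auto|apply omega_le_D]).
  assert (Hsu : M (s^-1 * u)) by apply join_l.
  assert (Hou : M (ω^-1 * u)) by apply join_r.
  (* s ω ≼ u means d k ∈ M for the element k ∈ H below, while D k ∈ M is clear. *)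
  set (c := D * (u^-1 * D) * D^-1).
  assert (Hc : Div G M d c).
  { apply d_balanced. split. apply M_conjD, HuD.
    unfold leR. replace (d * c^-1) with (D * (ω^-1 * u) * D^-1) by (unfold c, omega; group).
    apply M_conjD; auto. }
  set (k := (s^-1 * d) * d^-1 * c^-1).
  assert (Hk : H k).
  { apply gen_group_mul; [apply gen_group_mul|]; [apply gen_group_in, Div_compl_l; auto|..];
      apply gen_group_inv; [apply H_d|apply gen_group_in; auto]. }
  assert (MDk : M (D * k)).
  { replace (D * k) with (D * (s^-1 * u) * D^-1) by (unfold k, c; group). apply M_conjD; auto. }
  apply M_d_mul_of_M_D_mul in MDk; auto.
  unfold leL. replace ((s * ω)^-1 * u) with (D^-1 * (d * k) * D) by (unfold k, c, omega; group).
  apply M_conjDV; auto.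
Qed.

Lemma M_omega : M ω.
Proof. apply (Div_d_Div_D d), Div_self; auto. Qed.

Lemma N_omega_le n : N n -> forall z, n ≼ z -> ω ≼ z -> n * ω ≼ z.
Proof.
  intro Hn. induction Hn as [|s n Hs Hn IH] using gen_monoid_ind; intros z Hnz Hoz.
  - rewrite gmul1x. auto.
  - assert (Hsz : s * ω ≼ z).
    { apply simple_omega_le; auto. eapply leL_trans; [|apply Hnz]. apply leL_mulr, N_M; auto. }
    rewrite gmulA_r, <- (mul_inv_mul G s z). apply leL_mull.
    apply IH; apply (leL_mull_cancel s); rewrite mul_inv_mul; auto.
Qed.

Lemma omega_le_N_omega n : N n -> ω ≼ n * ω.
Proof.
  intro Hn. unfold leL, omega.
  replace ((d^-1 * D)^-1 * (n * (d^-1 * D))) with (D^-1 * (d * n * d^-1) * D) by group.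
  apply M_conjDV, N_M, gen_monoid_conj; auto. intros; apply Div_conj; auto.
Qed.

Lemma omega_le_join1_H_omega g : H g -> ω ≼ join one (g * ω).
Proof.
  intro Hg. destruct (H_fraction g Hg) as [x [y [Hx [Hy ->]]]].
  replace (join one (x^-1 * y * ω)) with (x^-1 * join x (y * ω))
    by (rewrite mul_join; f_equal; group).
  apply (leL_mull_cancel x). rewrite mul_inv_mul. set (z := join x (y * ω)).
  assert (Hyz : y * ω ≼ z) by apply join_r.
  assert (Hxz : x ≼ z) by apply join_l.
  assert (Hyz' : y ≼ z) by (eapply leL_trans; [apply leL_mulr, M_omega|auto]).
  assert (Hjoin : join y x * ω ≼ z).
  { rewrite <- mul_rcompl, gmulA_r, <- (mul_inv_mul G y z). apply leL_mull.
    apply N_omega_le; [apply N_rcompl; auto| |];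
      apply (leL_mull_cancel y); rewrite mul_inv_mul; auto.
    rewrite mul_rcompl. apply join_lub; auto. }
  eapply leL_trans; [|apply Hjoin]. rewrite joinC, <- mul_rcompl, gmulA_r.
  apply leL_mull, omega_le_N_omega, N_rcompl; auto.
Qed.

Lemma omega_le_of_D_le a h : M a -> H h -> D ≼ h * a -> ω ≼ a.
Proof.
  intros Ma Hh HD. eapply leL_trans.
  - apply (omega_le_join1_H_omega (h^-1 * d)).
    apply gen_group_mul; [apply gen_group_inv; auto|apply H_d].
  - apply join_lub; [apply leL_1_of_M; auto|]. apply (leL_mull_cancel h).
    replace (h * (h^-1 * d * ω)) with D by (unfold omega; group). auto.
Qed.

Lemma HN_reduced_word_le_coset_word theta h w :
  HN_reduced G M D d theta -> H h -> represents G M D w (h * theta) ->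
  exists w', represents G M D w' theta /\ (length w' <= length w)%nat.
Proof.
  intros [a [p [[[Ma _] Etheta] [Ha Hp]]]] Hh Hw.
  destruct (word_bounds w _ Hw) as [i [s [Hi [Hs Hlen]]]].
  apply (leL_mulr_zpow (- p)) in Hi, Hs. rewrite <- zpow_add in Hi, Hs.
  replace (h * theta * D ^^ (- p)) with (h * a) in Hi, Hs by (rewrite Etheta, zpow_opp; group).
  set (t := Z.to_nat (Z.max (s + - p) 0)).
  assert (Hat : a ≼ D ^^ Z.of_nat t).
  { apply (N_reduced_le_zpow a Ha h); auto.
    eapply leL_trans; [apply Hs|apply zpow_mono; lia]. }
  assert (Hip : p = 0%Z \/ (p < 0 /\ i + - p <= 0)%Z).
  { destruct Hp as [->|[Hp Hom]]; auto. right. split; auto.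
    destruct (Z_le_gt_dec (i + - p) 0); auto. exfalso. apply Hom.
    apply (omega_le_of_D_le a h); auto. eapply leL_trans; [|apply Hi].
    rewrite <- (zpow_1 G D) at 1. apply zpow_mono. lia. }
  destruct (represents_of_zpow_form a p t Ma ltac:(lia) Hat) as [w' [Hw' Lw']].
  exists w'. rewrite Etheta. split; auto. lia.
Qed.

End Parabolic.
End Garside.
End LatticeOrder.

Lemma wordlen_of_represents (G : Grp) (M : G -> Prop) (D b : G) w :
  represents G M D w b -> exists n, wordlen G M D b n.
Proof.
  intro Hw.
  destruct (dec_inh_nat_subset_has_unique_least_element
              (fun n => exists w, represents G M D w b /\ length w = n)
              (fun n => classic _) (ex_intro _ _ (ex_intro _ w (conj Hw eq_refl))))
    as [n [[[w' [Hw' <-]] Hmin] _]].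
  exists (length w'). split; [eauto|]. intros w'' Hw''. apply Hmin. eauto.
Qed.

Theorem theorem3p4 (G : Grp) (M : G -> Prop) (D d : G) :
  garside G M D ->
  parabolic G M D d ->
  (exists h : G, parH G M d h /\ h <> gone) ->
  forall theta : G, HN_reduced G M D d theta ->
  exists n : nat, wordlen G M D theta n /\ coset_len G M D (parH G M d) theta n.
Proof.
  intros [[M_one M_mul] [M_pointed [D_balanced [_ [_ [M_gen [G_gen M_lattice]]]]]]]
    [d_balanced Div_d_iff] _ theta Htheta.
  destruct (G_gen theta) as [pw [Hpw Epw]].
  destruct (represents_of_simple_word G M D pw Hpw) as [w [Hw _]]. rewrite Epw in Hw.
  destruct (wordlen_of_represents G M D theta w Hw) as [n Hn].
  exists n. split; [exact Hn|split].
  - exists theta. split; auto. exists gone. split; [apply gen_group_1|group].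
  - intros b m [h [Hh ->]] [[w1 [Hw1 <-]] _].
    destruct (HN_reduced_word_le_coset_word G M M_one M_mul M_pointed M_lattice
                D D_balanced M_gen d d_balanced Div_d_iff theta h w1 Htheta Hh Hw1)
      as [w2 [Hw2 Hlen]].
    apply Hn in Hw2. lia.
Qed.
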